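(* Let $0\le d<d'$ be integers and $\alpha_1,\dots,\alpha_{d'+1}>0$. If reconstruction is possible for the poset $\mathbb Z_{\ge0}^{d+1}$ with parameters $(\alpha_1,\dots,\alpha_{d+1})$, then reconstruction is possible for the poset $\mathbb Z_{\ge0}^{d'+1}$ with parameters $(\alpha_1,\dots,\alpha_{d'+1})$.
   Context: Gaussian broadcast model on $\mathbb{Z}_{\ge0}^{k+1}$ (for $k=d$ or $d'$) with parameters $(\alpha_1,\dots,\alpha_{k+1})$: order $u\le v$ iff $v-u\in\mathbb{Z}_{\ge0}^{k+1}$; $L_t$ = tuples with coordinate sum $t$; $\mathfrak p(v)$ = set of elements covered by $v$, so $|\mathfrak p(v)|$ is the number of positive coordinates. Let $X_0\sim\mathcal N(0,1)$, independently i.i.d. $W_{u\to v}\sim\mathcal N(0,1)$ for covering pairs $u\lessdot v$, $X_{\mathbf 0}=X_0$, and $X_v=\alpha_{|\mathfrak p(v)|}\sum_{u\in\mathfrak p(v)}(X_u+W_{u\to v})$ for $v\ne\mathbf 0$. Reconstruction is possible if there is $c:P\to\mathbb R$ with finitely many nonzero values on each layer such that $\zeta_t:=\sum_{u\in L_t}c_uX_u$ satisfies $\operatorname{Var}(\zeta_t)>0$ for all $t$ and $\operatorname{Cov}(\zeta_t,X_0)/\sqrt{\operatorname{Var}(\zeta_t)\operatorname{Var}(X_0)}\not\to0$ as $t\to\infty$. *)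

From HB Require Import structures.
From mathcomp Require Import all_boot all_order all_algebra.
From mathcomp Require Import all_classical all_reals all_analysis.
Set Implicit Arguments. Unset Strict Implicit. Unset Printing Implicit Defensive.
Import Order.TTheory GRing.Theory Num.Theory.
Local Open Scope classical_set_scope.
Local Open Scope ring_scope.

Definition vert (k : nat) := {ffun 'I_k.+1 -> nat}.

Definition vsum k (v : vert k) : nat := (\sum_(i < k.+1) v i)%N.

(* v - e_i  (used only when v i > 0, so that dec v i is covered by v) *)
Definition dec k (v : vert k) (i : 'I_k.+1) : vert k :=
  [ffun j => if j == i then (v j).-1 else v j].

(* |p(v)| = number of positive coordinates *)
Definition npos k (v : vert k) : nat := #|[pred i | (0 < v i)%N]|.

Definition layer k (t : nat) : seq (vert k) :=
  seq.map (fun f : {ffun 'I_k.+1 -> 'I_t.+1} => [ffun i => val (f i)] : vert k)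
    (seq.filter (fun f : {ffun 'I_k.+1 -> 'I_t.+1} =>
               (\sum_(i < k.+1) val (f i) == t)%N)
            (enum {ffun 'I_k.+1 -> 'I_t.+1})).

(* Independent standard Gaussian sources: None is X_0, Some (u, i) is the
   noise W_{u -> u + e_i} on the covering pair u <. u + e_i. *)
Definition source k := option (vert k * 'I_k.+1).

(* Coefficient of source s in X_v, where n is the layer of v.  This is the
   literal unfolding of X_0 and X_v = alpha_{|p(v)|} sum_{u in p(v)} (X_u + W_{u->v}). *)
Fixpoint coefX (R : realType) k (alpha : nat -> R) (n : nat) (v : vert k)
    (s : source k) : R :=
  match n with
  | 0 => if s is None then 1 else 0
  | n'.+1 => alpha (npos v) *
      \sum_(i < k.+1 | (0 < v i)%N)
         (coefX alpha n' (dec v i) s + (s == Some (dec v i, i))%:R)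
  end.

Definition Xcoef (R : realType) k (alpha : nat -> R) (v : vert k) (s : source k) : R :=
  coefX alpha (vsum v) v s.

(* All sources on which variables of layers <= t can depend. *)
Definition sources k (t : nat) : seq (source k) :=
  None :: [seq Some (u, i) | u <- flatten [seq layer k s | s <- iota 0 t],
                             i <- enum 'I_k.+1].

Definition zetacoef (R : realType) k (alpha : nat -> R) (c : vert k -> R)
    (t : nat) (s : source k) : R :=
  \sum_(u <- layer k t) c u * Xcoef alpha u s.

(* Var(zeta_t) and Cov(zeta_t, X_0) for linear combinations of
   independent N(0,1) sources; Var(X_0) = 1. *)
Definition var_zeta (R : realType) k (alpha : nat -> R) (c : vert k -> R) (t : nat) : R :=
  \sum_(s <- sources k t) (zetacoef alpha c t s) ^+ 2.

Definition cov_zeta_X0 (R : realType) k (alpha : nat -> R) (c : vert k -> R) (t : nat) : R :=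
  zetacoef alpha c t None.

Definition var_X0 (R : realType) : R := 1.

Definition corr_zeta_X0 (R : realType) k (alpha : nat -> R) (c : vert k -> R) (t : nat) : R :=
  cov_zeta_X0 alpha c t / Num.sqrt (var_zeta alpha c t * var_X0 R).

(* Reconstruction is possible on Z_{>=0}^{k+1} with parameters alpha
   (layers are finite, so "finitely many nonzero values on each layer" is automatic). *)
Definition reconstructible (R : realType) (k : nat) (alpha : nat -> R) : Prop :=
  exists c : vert k -> R,
    (forall t, 0 < var_zeta alpha c t) /\
    ~ (corr_zeta_X0 alpha c @ \oo --> 0).

(* The face of Z_{>=0}^{d'+1} on which the coordinates beyond d vanish is a
   down-closed copy of Z_{>=0}^{d+1}: its vertices have the same parents and
   the same number of positive coordinates, hence the same weights alpha.  So
   the broadcast process restricted to the face is the process on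
   Z_{>=0}^{d+1}, and extending c by zero off the face yields, layer by layer,
   a zeta_t with the same coefficients on the corresponding sources and zero
   coefficients on all other sources: variance and correlation with X_0 are
   unchanged. *)
From Pilot Require Import Defs.
From mathcomp Require Import all_boot all_order all_algebra.
From mathcomp Require Import all_classical all_reals all_analysis.
Import Order.TTheory GRing.Theory Num.Theory.
Local Open Scope classical_set_scope.
Local Open Scope ring_scope.
Set Implicit Arguments. Unset Strict Implicit.

Lemma leq_coord_vsum k (u : vert k) i : (u i <= vsum u)%N.
Proof. by rewrite /vsum (bigD1 i) //= leq_addr. Qed.

Lemma mem_layer k t (u : vert k) : (u \in layer k t) = (vsum u == t).
Proof.
apply/idP/idP.
  case/mapP => f; rewrite mem_filter => /andP[/eqP ht _] ->.
  by apply/eqP; apply: etrans ht; apply: eq_bigr => i _; rewrite ffunE.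
move=> /eqP ht; apply/mapP; exists [ffun i => inord (u i) : 'I_t.+1].
  rewrite mem_filter mem_enum andbT; apply/eqP; rewrite -ht.
  by apply: eq_bigr => i _; rewrite ffunE /= inordK // ltnS leq_coord_vsum.
by apply/ffunP => i; rewrite !ffunE /= inordK // ltnS -ht leq_coord_vsum.
Qed.

Lemma uniq_layer k t : uniq (layer k t).
Proof.
rewrite map_inj_uniq ?filter_uniq -?enumT ?enum_uniq // => f1 f2 ef.
apply/ffunP => i; apply: val_inj.
by have := congr1 (fun g : vert k => g i) ef; rewrite !ffunE.
Qed.

Lemma mem_lower_layers k t (u : vert k) :
  (u \in flatten [seq layer k s | s <- iota 0 t]) = (vsum u < t)%N.
Proof.
apply/flattenP/idP.
  by case=> l /mapP[s]; rewrite mem_iota => /andP[_ st] ->; rewrite mem_layer => /eqP ->.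
move=> ut; exists (layer k (vsum u)); last by rewrite mem_layer.
by apply/mapP; exists (vsum u); rewrite // mem_iota.
Qed.

Lemma uniq_lower_layers k t : uniq (flatten [seq layer k s | s <- iota 0 t]).
Proof.
elim: t => [|t IHt] //.
rewrite -[t.+1]addn1 iotaD map_cat flatten_cat cat_uniq IHt /= cats0 uniq_layer andbT.
by apply/hasPn => u; rewrite add0n mem_layer => /eqP <-; rewrite mem_lower_layers ltnn.
Qed.

Lemma mem_sources k t (s : source k) :
  (s \in sources k t) = if s is Some (u, _) then (vsum u < t)%N else true.
Proof.
case: s => [[u i]|]; last by rewrite in_cons eqxx.
rewrite in_cons /=; apply/allpairsP/idP.
  by case=> [[v j]] /= [vt _ [-> _]]; rewrite -mem_lower_layers.
by move=> ut; exists (u, i); rewrite /= mem_lower_layers mem_enum.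
Qed.

Lemma uniq_sources k t : uniq (sources k t).
Proof.
rewrite /= allpairs_uniq ?uniq_lower_layers ?enum_uniq ?andbT //.
  by apply/allpairsP => -[p [_ _]].
by move=> [u1 i1] [u2 i2] _ _ /= [-> ->].
Qed.

Section FaceEmbedding.

Variables (k n : nat) (le_kn : (k <= n)%N).

Definition widen_coord (i : 'I_k.+1) : 'I_n.+1 := widen_ord (le_kn : (k.+1 <= n.+1)%N) i.

Definition vert_ext (u : vert k) : vert n :=
  [ffun j : 'I_n.+1 => if (j < k.+1)%N then u (inord j) else 0%N].

Definition vert_restr (v : vert n) : vert k := [ffun i => v (widen_coord i)].

Definition in_face (v : vert n) : bool :=
  [forall j : 'I_n.+1, (k < j)%N ==> (v j == 0%N)].

Lemma widen_coordE i : widen_coord i = inord i.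
Proof. by apply: val_inj; rewrite /= inordK // (leq_trans (ltn_ord i)). Qed.

Lemma vert_ext_widen u i : vert_ext u (widen_coord i) = u i.
Proof. by rewrite ffunE /= ltn_ord inord_val. Qed.

Lemma vert_ext_out u (j : 'I_n.+1) : (k < j)%N -> vert_ext u j = 0%N.
Proof. by move=> kj; rewrite ffunE ltnS leqNgt kj. Qed.

Lemma vert_extK : cancel vert_ext vert_restr.
Proof. by move=> u; apply/ffunP => i; rewrite ffunE vert_ext_widen. Qed.

Lemma vert_ext_inj : injective vert_ext.
Proof. exact: can_inj vert_extK. Qed.

Lemma in_face_ext u : in_face (vert_ext u).
Proof. by apply/forallP => j; apply/implyP => /vert_ext_out ->. Qed.

Lemma vert_restrK v : in_face v -> vert_ext (vert_restr v) = v.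
Proof.
move=> /forallP vface; apply/ffunP => j; rewrite !ffunE.
case: ifP => jk; first by rewrite widen_coordE; congr (v _); apply: val_inj; rewrite /= !inordK.
by move: (vface j); rewrite ltnNge -ltnS jk => /eqP ->.
Qed.

Lemma big_widen_coord (T : Type) (idx : T) (op : Monoid.com_law idx)
    (F : 'I_n.+1 -> T) :
  (forall j : 'I_n.+1, (k < j)%N -> F j = idx) ->
  \big[op/idx]_(j < n.+1) F j = \big[op/idx]_(i < k.+1) F (widen_coord i).
Proof.
move=> Fout; pose G j := F (inord j).
rewrite [RHS](eq_bigr (fun i : 'I_k.+1 => G i)); last by move=> i _; rewrite widen_coordE.
rewrite (big_ord_widen _ G (le_kn : (k.+1 <= n.+1)%N)) [RHS]big_mkcond; apply: eq_bigr => j _.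
by case: ifP => jk; rewrite /G ?inord_val // Fout // ltnNge -ltnS jk.
Qed.

Lemma vsum_ext u : vsum (vert_ext u) = vsum u.
Proof.
rewrite /vsum big_widen_coord; last by move=> j /vert_ext_out.
by apply: eq_bigr => i _; rewrite vert_ext_widen.
Qed.

Lemma npos_ext u : npos (vert_ext u) = npos u.
Proof.
rewrite /npos -!sum1_card !(big_mkcond (fun i => _ \in _)) /=.
rewrite big_widen_coord; last by move=> j kj; rewrite inE vert_ext_out.
by apply: eq_bigr => i _; rewrite !inE vert_ext_widen.
Qed.

Lemma dec_ext u i : dec (vert_ext u) (widen_coord i) = vert_ext (dec u i).
Proof.
apply/ffunP => j; rewrite !ffunE; case: ifP => [/eqP -> | ji].
  by rewrite /= ltn_ord inord_val eqxx.
case: ltnP => // jk; rewrite ifN //; apply: contraFN ji => /eqP ej.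
by apply/eqP; apply: val_inj; rewrite /= -ej inordK.
Qed.

Lemma perm_face_layer t :
  perm_eq [seq v <- layer n t | in_face v] (map vert_ext (layer k t)).
Proof.
apply: uniq_perm; rewrite ?filter_uniq ?(map_inj_uniq vert_ext_inj) ?uniq_layer //.
move=> v; rewrite mem_filter mem_layer; apply/andP/mapP.
  case=> vface /eqP vt; exists (vert_restr v); last by rewrite vert_restrK.
  by rewrite mem_layer -vt -vsum_ext vert_restrK.
by case=> u; rewrite mem_layer => ut ->; rewrite in_face_ext vsum_ext.
Qed.

(* [source_restr] is the partial inverse of [source_ext]: [Some None] is the
   root source X_0, whereas [None] marks a source outside the face. *)
Definition source_ext (s : source k) : source n :=
  if s is Some (u, i) then Some (vert_ext u, widen_coord i) else None.

Definition source_restr (s : source n) : option (source k) :=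
  match s with
  | None => Some None
  | Some (v, j) =>
      if in_face v && (j < k.+1)%N then Some (Some (vert_restr v, inord j)) else None
  end.

Lemma source_extK s : source_restr (source_ext s) = Some s.
Proof. by case: s => [[u i]|] //=; rewrite in_face_ext ltn_ord vert_extK inord_val. Qed.

Lemma source_ext_inj : injective source_ext.
Proof. by move=> s1 s2 es; have := source_extK s1; rewrite es source_extK => -[]. Qed.

Lemma source_restr_Some s s0 : source_restr s = Some s0 -> s = source_ext s0.
Proof.
case: s => [[v j]|] /=; last by case=> <-.
case: ifP => // /andP[vface jk] [<-] /=.
by rewrite vert_restrK //; congr (Some (_, _)); apply: val_inj; rewrite /= inordK.
Qed.

Lemma mem_source_ext_sources t s0 :
  (source_ext s0 \in sources n t) = (s0 \in sources k t).
Proof. by case: s0 => [[u i]|]; rewrite !mem_sources //= vsum_ext. Qed.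

Lemma perm_sources_ext t :
  perm_eq [seq s <- sources n t | source_restr s != None]
          (map source_ext (sources k t)).
Proof.
apply: uniq_perm; rewrite ?filter_uniq ?(map_inj_uniq source_ext_inj) ?uniq_sources //.
move=> s; rewrite mem_filter; apply/andP/mapP.
  case; case E: (source_restr s) => [s0|] // _.
  by rewrite (source_restr_Some E) mem_source_ext_sources; exists s0.
by case=> s0 s0t ->; rewrite source_extK mem_source_ext_sources.
Qed.

Variables (R : realType) (alpha : nat -> R).

(* Qualified name: [coefX] alone refers to the polynomial lemma. *)
Lemma coefX_ext m u s :
  Defs.coefX alpha m (vert_ext u) s =
  if source_restr s is Some s0 then Defs.coefX alpha m u s0 else 0.
Proof.
elim: m u s => [|m IHm] u s.
  case E: (source_restr s) => [s0|] /=; last by case: s E => [[]|].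
  by rewrite (source_restr_Some E); case: s0 {E} => [[]|].
rewrite /= npos_ext big_mkcond big_widen_coord; last by move=> j /vert_ext_out ->.
under eq_bigr => i _ do rewrite vert_ext_widen dec_ext IHm.
have dec_source i :
  Some (vert_ext (dec u i), widen_coord i) = source_ext (Some (dec u i, i)) by [].
case E: (source_restr s) => [s0|].
  rewrite (source_restr_Some E) [in RHS]big_mkcond; congr (_ * _); apply: eq_bigr => i _.
  by case: ifP => // _; rewrite dec_source (inj_eq source_ext_inj).
rewrite big1 ?mulr0 // => i _; case: ifP => // _; rewrite add0r.
by case: eqP => // es; move: E; rewrite es dec_source source_extK.
Qed.

Definition coef_ext (c : vert k -> R) (v : vert n) : R :=
  if in_face v then c (vert_restr v) else 0.

Lemma zetacoef_ext c t s :
  zetacoef alpha (coef_ext c) t s =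
  if source_restr s is Some s0 then zetacoef alpha c t s0 else 0.
Proof.
rewrite /zetacoef (bigID in_face) /= [X in _ + X]big1 ?addr0; last first.
  by move=> v /negbTE vface; rewrite /coef_ext vface mul0r.
rewrite -big_filter (perm_big _ (perm_face_layer t)) big_map.
under eq_bigr => u _ do rewrite /coef_ext in_face_ext vert_extK /Xcoef vsum_ext coefX_ext.
case: source_restr => [s0|] //.
by rewrite big1 // => u _; rewrite mulr0.
Qed.

Lemma var_zeta_ext c t : var_zeta alpha (coef_ext c) t = var_zeta alpha c t.
Proof.
rewrite /var_zeta (bigID (fun s => source_restr s != None)) /= [X in _ + X]big1 ?addr0.
  rewrite -big_filter (perm_big _ (perm_sources_ext t)) big_map.
  by apply: eq_bigr => s0 _; rewrite zetacoef_ext source_extK.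
by move=> s; rewrite negbK zetacoef_ext => /eqP ->; rewrite expr0n.
Qed.

Lemma corr_zeta_X0_ext c : corr_zeta_X0 alpha (coef_ext c) = corr_zeta_X0 alpha c.
Proof. by apply: funext => t; rewrite /corr_zeta_X0 var_zeta_ext /cov_zeta_X0 zetacoef_ext. Qed.

End FaceEmbedding.

Lemma reconstructible_mono (R : realType) (alpha : nat -> R) k n :
  (k <= n)%N -> reconstructible k alpha -> reconstructible n alpha.
Proof.
move=> le_kn [c [var_gt0 corr_not0]]; exists (coef_ext le_kn c).
by rewrite corr_zeta_X0_ext; split=> // t; rewrite var_zeta_ext.
Qed.

Theorem lemmal (R : realType) (d d' : nat) (alpha : nat -> R) :
  (d < d')%N ->
  (forall i : nat, (1 <= i <= d'.+1)%N -> 0 < alpha i) ->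
  reconstructible d alpha -> reconstructible d' alpha.
Proof. by move=> /ltnW le_dd' _; apply: reconstructible_mono. Qed.
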